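(* Let $n\ge 2$ and let $f$ be the $n$-ary operation on $\mathbb{Z}_8$ given by $f(\mathbf{x})=x_1x_2\cdots x_n\sum_{\alpha\in I_n}b_\alpha\mathbf{x}^\alpha$ with $b_\alpha\in\{0,1\}$ for every $\alpha\in I_n$. If $f$ preserves the relation $Z$, then $b_\alpha=0$ for every $\alpha\in I_n$.
   Context: $I_n$ is the set of all $n$-tuples $\alpha\in\{0,1,2\}^n$ with at most two nonzero components, and $\mathbf{x}^\alpha=x_1^{\alpha_1}\cdots x_n^{\alpha_n}$. $P_4$ is the power set of $\{1,2,3,4\}$. For $A\in P_4$, $\mathbf{g}^A\in\mathbb{Z}_8^{P_4}$ is the tuple with $B$-component $1$ if $A\subseteq B$ and $0$ otherwise. Every $\mathbf{u}\in\mathbb{Z}_8^{P_4}$ has a unique expression $\mathbf{u}=\sum_{A\in P_4}a_A\mathbf{g}^A$ with $a_A\in\mathbb{Z}_8$. $Z\subseteq \mathbb{Z}_8^{P_4}$ consists of all $\mathbf{u}$ whose coefficients satisfy: (Z1) $a_{\{2\}}\equiv 2a_{\{1\}}\pmod 4$ and $a_{\{4\}}\equiv 2a_{\{3\}}\pmod 4$; (Z2) $a_A\equiv 0\pmod 2$ whenever $|A|\ge 2$; (Z3) $a_A\equiv 0\pmod 4$ whenever $|A|\ge 2$ and $A\cap\{2,4\}\neq\emptyset$; (Z4) $a_A=0$ whenever $\{2,4\}\subseteq A$. An operation preserves $Z$ if applying it componentwise to elements of $Z$ yields an element of $Z$. *)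

From HB Require Import structures.
From mathcomp Require Import all_boot all_order all_algebra.
Set Implicit Arguments. Unset Strict Implicit. Unset Printing Implicit Defensive.
Import GRing.Theory.
Local Open Scope ring_scope.

(* The ground set {1,2,3,4} is represented by 'I_4, with element k+1 encoded
   as the ordinal k.  So e1, e2, e3, e4 below stand for 1, 2, 3, 4. *)
Definition e1 : 'I_4 := @Ordinal 4 0 isT.
Definition e2 : 'I_4 := @Ordinal 4 1 isT.
Definition e3 : 'I_4 := @Ordinal 4 2 isT.
Definition e4 : 'I_4 := @Ordinal 4 3 isT.

Definition P4 := {set 'I_4}.

Definition vecP4 := {ffun P4 -> 'Z_8}.

Definition gvec (A : P4) : vecP4 := [ffun B : P4 => (A \subset B)%:R].

Definition combo (a : vecP4) : vecP4 := [ffun B : P4 => \sum_(A : P4) a A * gvec A B].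

(* Conditions (Z1)-(Z4) on the coefficient family a (congruences read on the
   representative in {0,...,7}; reduction mod 2 / mod 4 is well defined on Z_8). *)
Definition Zcoeffs (a : vecP4) : Prop :=
  [/\
      (val (a [set e2]) %% 4 = (2 * val (a [set e1])) %% 4)%N /\
      (val (a [set e4]) %% 4 = (2 * val (a [set e3])) %% 4)%N,
      (forall A : P4, (2 <= #|A|)%N -> (2 %| val (a A))%N),
      (forall A : P4, (2 <= #|A|)%N -> A :&: [set e2; e4] != set0 ->
          (4 %| val (a A))%N) &
      (forall A : P4, [set e2; e4] \subset A -> a A = 0)].

Definition inZ (u : vecP4) : Prop := exists a : vecP4, u = combo a /\ Zcoeffs a.

Definition In_set (n : nat) (alpha : {ffun 'I_n -> 'I_3}) : bool :=
  (#|[set i | alpha i != ord0]| <= 2)%N.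

Definition monom (n : nat) (alpha : {ffun 'I_n -> 'I_3}) (x : 'I_n -> 'Z_8) : 'Z_8 :=
  \prod_(i < n) x i ^+ (alpha i : nat).

Definition fop (n : nat) (b : {ffun 'I_n -> 'I_3} -> 'Z_8) (x : 'I_n -> 'Z_8) : 'Z_8 :=
  (\prod_(i < n) x i) * \sum_(alpha | In_set alpha) b alpha * monom alpha x.

Definition preservesZ (n : nat) (f : ('I_n -> 'Z_8) -> 'Z_8) : Prop :=
  forall u : 'I_n -> vecP4, (forall i, inZ (u i)) ->
    inZ [ffun B : P4 => f (fun i => u i B)].

From mathcomp Require Import all_boot all_order all_algebra.
From mathcomp Require Import ring zify.
Set Implicit Arguments. Unset Strict Implicit. Unset Printing Implicit Defensive.
Import GRing.Theory.
Local Open Scope ring_scope.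

(* Feed f tuples whose i-th and j-th entries are elements X, Y of Z and whose
   other entries are the constant vector 1.  The image then depends on b only
   through the sums over beta of b_beta * x y x^(beta_i) y^(beta_j), and
   conditions (Z1), (Z3), (Z4) on the image, for a few test vectors X, Y with
   nonzero coefficients only at the empty set and singletons, show that
   4 * (sum of b_beta over beta in I_n with beta_i = e, beta_j = f) = 0 for all
   e, f.  For alpha in I_n choose i != j covering its support: every other beta
   in the corresponding sum has a strictly larger support, so by downward
   induction on the support size only 4 b_alpha = 0 remains, which forces
   b_alpha = 0 as b_alpha is 0 or 1. *)

Lemma subset_set2P (T : finType) (A : {set T}) x y : A \subset [set x; y] ->
  [\/ A = set0, A = [set x], A = [set y] | A = [set x; y]].
Proof.
move/subsetP=> sAxy.
have memA z : (z \in A) = (z == x) && (x \in A) || (z == y) && (y \in A).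
  apply/idP/idP=> [zA | /orP[] /andP[/eqP-> //]].
  by case/set2P: (sAxy z zA) => zE; rewrite zE -zE zA eqxx ?orbT.
case xA: (x \in A); case yA: (y \in A);
  [apply: Or44 | apply: Or42 | apply: Or43 | apply: Or41];
  by apply/setP=> z; rewrite memA xA yA !inE ?andbT ?andbF ?orbF.
Qed.

Lemma set1_eq0 (T : finType) (x : T) : ([set x] == set0) = false.
Proof. by apply/negbTE/set0Pn; exists x; rewrite set11. Qed.

Lemma combo_sum (a : vecP4) (B : P4) : combo a B = \sum_(A : P4 | A \subset B) a A.
Proof.
rewrite ffunE [RHS]big_mkcond; apply: eq_bigr => A _; rewrite ffunE.
by case: (A \subset B); rewrite ?mulr1 ?mulr0.
Qed.

Lemma combo_set0 (a : vecP4) : combo a set0 = a set0.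
Proof.
rewrite combo_sum (bigD1 set0) ?sub0set //= big1 ?addr0 // => A.
by rewrite subset0 => /andP[/eqP-> /eqP].
Qed.

Lemma combo_set1 (a : vecP4) (x : 'I_4) : combo a [set x] = a set0 + a [set x].
Proof.
rewrite combo_sum (bigD1 [set x]) ?subxx //= (bigD1 set0) ?sub0set //=;
  last by rewrite eq_sym set1_eq0.
rewrite big1 ?addr0 1?addrC // => A.
by rewrite subset1 => /andP[/andP[/orP[->|->]]].
Qed.

Lemma combo_set2 (a : vecP4) (x y : 'I_4) : x != y ->
  combo a [set x; y] = a set0 + a [set x] + a [set y] + a [set x; y].
Proof.
move=> xy.
have [xxy yxy] : x \in [set x; y] /\ y \in [set x; y] by rewrite !inE !eqxx orbT.
have x_y : [set x] != [set y] :> P4 by rewrite (inj_eq set1_inj).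
have xy_x : [set x; y] != [set x] :> P4.
  by apply/eqP=> /setP/(_ y); rewrite yxy inE eq_sym (negbTE xy).
have xy_y : [set x; y] != [set y] :> P4.
  by apply/eqP=> /setP/(_ x); rewrite xxy inE (negbTE xy).
have xy_0 : [set x; y] != set0 :> P4 by apply/set0Pn; exists x.
rewrite combo_sum (bigD1 [set x; y]) ?subxx //= (bigD1 [set x]) /=; last first.
  by rewrite eq_sym xy_x sub1set xxy.
rewrite (bigD1 [set y]) /=; last by rewrite eq_sym xy_y eq_sym x_y sub1set yxy.
rewrite (bigD1 set0) /=; last by rewrite sub0set !(eq_sym set0) xy_0 !set1_eq0.
rewrite big1 ?addr0; first ring.
move=> A /andP[/andP[/andP[/andP[/subset_set2P sA A_xy] A_x] A_y] A_0].
by case: sA => AE; move: A_xy A_x A_y A_0; rewrite AE eqxx ?andbF.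
Qed.

Lemma coef_set1 (a : vecP4) (x : 'I_4) : a [set x] = combo a [set x] - combo a set0.
Proof. rewrite combo_set1 combo_set0; ring. Qed.

Lemma coef_set2 (a : vecP4) (x y : 'I_4) : x != y ->
  a [set x; y] = combo a [set x; y] - combo a [set x] - combo a [set y] + combo a set0.
Proof. by move=> xy; rewrite combo_set2 // !combo_set1 combo_set0; ring. Qed.

Lemma dvd4_mul2_eq0 (z : 'Z_8) : (4 %| val z)%N -> 2 * z = 0.
Proof. by case: z => [[|[|[|[|[|[|[|[|m]]]]]]]] lt_m8] //= _; apply/eqP. Qed.

Lemma mod4_mul2 (z t : 'Z_8) : (val z %% 4 = (2 * val t) %% 4)%N -> 2 * z = 4 * t.
Proof.
case: z => [[|[|[|[|[|[|[|[|m]]]]]]]] lt_m8] //;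
  by case: t => [[|[|[|[|[|[|[|[|k]]]]]]]] lt_k8] //= _; apply/eqP.
Qed.

Definition affine_vec (c0 c1 c2 c3 c4 : 'Z_8) : vecP4 :=
  [ffun B : P4 => c0 + c1 * (e1 \in B)%:R + c2 * (e2 \in B)%:R
                  + c3 * (e3 \in B)%:R + c4 * (e4 \in B)%:R].

Definition affine_coef (c0 c1 c2 c3 c4 : 'Z_8) : vecP4 :=
  [ffun A : P4 => if A == set0 then c0 else if A == [set e1] then c1
     else if A == [set e2] then c2 else if A == [set e3] then c3
     else if A == [set e4] then c4 else 0].

Lemma affine_coef_card_ge2 c0 c1 c2 c3 c4 (A : P4) : (2 <= #|A|)%N ->
  affine_coef c0 c1 c2 c3 c4 A = 0.
Proof.
move=> A_ge2; rewrite ffunE.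
by repeat (case: eqP => [AE|_]; first by move: A_ge2; rewrite AE ?cards0 ?cards1).
Qed.

Lemma combo_affine_coef c0 c1 c2 c3 c4 :
  combo (affine_coef c0 c1 c2 c3 c4) = affine_vec c0 c1 c2 c3 c4.
Proof.
apply/ffunP=> B; rewrite !ffunE.
rewrite (bigD1 set0) //= (bigD1 [set e1]) /=; last by rewrite set1_eq0.
rewrite (bigD1 [set e2]) /=; last by rewrite set1_eq0 (inj_eq set1_inj).
rewrite (bigD1 [set e3]) /=; last by rewrite set1_eq0 !(inj_eq set1_inj).
rewrite (bigD1 [set e4]) /=; last by rewrite set1_eq0 !(inj_eq set1_inj).
rewrite big1 => [|A /andP[/andP[/andP[/andP[A0 A1] A2] A3] A4]]; last first.
  by rewrite !ffunE (negbTE A0) (negbTE A1) (negbTE A2) (negbTE A3) (negbTE A4) mul0r.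
by rewrite !ffunE !eqxx !set1_eq0 !(inj_eq set1_inj) sub0set !sub1set mulr1 addr0 !addrA.
Qed.

Lemma affine_vec_inZ c0 c1 c2 c3 c4 :
  (val c2 %% 4 = (2 * val c1) %% 4)%N -> (val c4 %% 4 = (2 * val c3) %% 4)%N ->
  inZ (affine_vec c0 c1 c2 c3 c4).
Proof.
move=> c12 c34; exists (affine_coef c0 c1 c2 c3 c4).
split; first by rewrite combo_affine_coef.
split=> [|A A_ge2|A A_ge2 _|A sA].
- by rewrite !ffunE !set1_eq0 !(inj_eq set1_inj).
- by rewrite affine_coef_card_ge2.
- by rewrite affine_coef_card_ge2.
- by rewrite affine_coef_card_ge2 // (leq_trans _ (subset_leq_card sA)) ?cards2.
Qed.

Lemma prod_ord_pair (R : comPzSemiRingType) n (i j : 'I_n) (F : 'I_n -> R) :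
  i != j -> (forall k, k != i -> k != j -> F k = 1) -> \prod_(k < n) F k = F i * F j.
Proof.
move=> ij F1; rewrite (bigD1 i) //= (bigD1 j) 1?eq_sym //=.
by rewrite big1 ?mulr1 // => k /andP[ki kj]; apply: F1.
Qed.

Definition pair_mono (x y : 'Z_8) (u v : nat) : 'Z_8 := x * y * (x ^+ u * y ^+ v).

Definition pair_mono_at (X Y : vecP4) (B : P4) : nat -> nat -> 'Z_8 :=
  pair_mono (X B) (Y B).

Section PairReduction.

Variables (n : nat) (b : {ffun 'I_n -> 'I_3} -> 'Z_8) (i j : 'I_n).

Definition pair_sum (phi : nat -> nat -> 'Z_8) : 'Z_8 :=
  \sum_(beta | In_set beta) b beta * phi (beta i) (beta j).

Lemma eq_pair_sum phi psi : (forall u v, (u < 3)%N -> (v < 3)%N -> phi u v = psi u v) ->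
  pair_sum phi = pair_sum psi.
Proof. by move=> phi_psi; apply: eq_bigr => beta _; rewrite phi_psi. Qed.

Lemma pair_sumD phi psi : pair_sum phi + pair_sum psi = pair_sum (fun u v => phi u v + psi u v).
Proof. by rewrite /pair_sum -big_split; apply: eq_bigr => beta _; rewrite mulrDr. Qed.

Lemma pair_sumB phi psi : pair_sum phi - pair_sum psi = pair_sum (fun u v => phi u v - psi u v).
Proof. by rewrite /pair_sum -sumrB; apply: eq_bigr => beta _; rewrite mulrBr. Qed.

Lemma pair_sumMl c phi : c * pair_sum phi = pair_sum (fun u v => c * phi u v).
Proof. by rewrite /pair_sum mulr_sumr; apply: eq_bigr => beta _; rewrite mulrCA. Qed.

Lemma eq0_pair_sum phi psi :
  (forall u v, (u < 3)%N -> (v < 3)%N -> psi u v = phi u v) ->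
  pair_sum phi = 0 -> pair_sum psi = 0.
Proof. by move=> /eq_pair_sum ->. Qed.

Lemma pair_sum_add0 phi psi : pair_sum phi = 0 -> pair_sum psi = 0 ->
  pair_sum (fun u v => phi u v + psi u v) = 0.
Proof. by move=> phi0 psi0; rewrite -pair_sumD phi0 psi0 addr0. Qed.

Hypothesis neq_ij : i != j.

Lemma fop_pair (x : 'I_n -> 'Z_8) : (forall k, k != i -> k != j -> x k = 1) ->
  fop b x = pair_sum (pair_mono (x i) (x j)).
Proof.
move=> x1; rewrite /fop (prod_ord_pair neq_ij x1) mulr_sumr.
apply: eq_bigr => beta _; rewrite /monom (prod_ord_pair (F := fun k => x k ^+ beta k) neq_ij).
  by rewrite mulrCA.
by move=> k ki kj; rewrite x1 // expr1n.
Qed.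

Definition pair_input (X Y : vecP4) (k : 'I_n) : vecP4 :=
  if k == i then X else if k == j then Y else affine_vec 1 0 0 0 0.

Hypothesis fZ : preservesZ (fop b).

Lemma preservesZ_pair X Y : inZ X -> inZ Y ->
  exists2 a, Zcoeffs a & forall B, combo a B = pair_sum (pair_mono_at X Y B).
Proof.
move=> XZ YZ.
have inputZ k : inZ (pair_input X Y k).
  by rewrite /pair_input; case: (k == i) => //; case: (k == j) => //; apply: affine_vec_inZ.
have [a [image_a Za]] := fZ inputZ; exists a => // B.
rewrite -image_a ffunE fop_pair; first by rewrite /pair_input eqxx eq_sym (negbTE neq_ij) eqxx.
by move=> k ki kj; rewrite /pair_input (negbTE ki) (negbTE kj) ffunE; ring.
Qed.

Lemma pair_sum_Z1 X Y : inZ X -> inZ Y ->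
  pair_sum (fun u v => 2 * (pair_mono_at X Y [set e4] u v - pair_mono_at X Y set0 u v)
                       - 4 * (pair_mono_at X Y [set e3] u v - pair_mono_at X Y set0 u v)) = 0.
Proof.
move=> XZ YZ; have [a [[_ Z1] _ _ _] image_a] := preservesZ_pair XZ YZ.
have /eqP := mod4_mul2 Z1.
rewrite (coef_set1 a e4) (coef_set1 a e3) !image_a !pair_sumB !pair_sumMl.
by rewrite -subr_eq0 pair_sumB => /eqP.
Qed.

Lemma pair_sum_Z3 X Y (x y : 'I_4) : inZ X -> inZ Y -> x != y ->
  [|| x == e2, x == e4, y == e2 | y == e4] ->
  pair_sum (fun u v => 2 * (pair_mono_at X Y [set x; y] u v - pair_mono_at X Y [set x] u v
                            - pair_mono_at X Y [set y] u v + pair_mono_at X Y set0 u v)) = 0.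
Proof.
move=> XZ YZ xy xy24; have [a [_ _ Z3 _] image_a] := preservesZ_pair XZ YZ.
have meets24 : [set x; y] :&: [set e2; e4] != set0.
  by apply/set0Pn; case/or4P: xy24 => /eqP->; [exists e2 | exists e4 | exists e2 | exists e4];
     rewrite !inE !eqxx ?orbT.
have card_xy : (2 <= #|[set x; y]|)%N by rewrite cards2 xy.
have := dvd4_mul2_eq0 (Z3 _ card_xy meets24).
by rewrite (coef_set2 a xy) !image_a !pair_sumB pair_sumD pair_sumMl.
Qed.

Lemma pair_sum_Z4 X Y : inZ X -> inZ Y ->
  pair_sum (fun u v => pair_mono_at X Y [set e2; e4] u v - pair_mono_at X Y [set e2] u v
                       - pair_mono_at X Y [set e4] u v + pair_mono_at X Y set0 u v) = 0.
Proof.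
move=> XZ YZ; have [a [_ _ _ Z4] image_a] := preservesZ_pair XZ YZ.
by have := Z4 _ (subxx _); rewrite (coef_set2 a) // !image_a !pair_sumB pair_sumD.
Qed.

Ltac eval_pair_mono :=
  let u := fresh "u" in let v := fresh "v" in
  move=> u v; rewrite /pair_mono;
  case: u => [|[|[|?]]] // _; case: v => [|[|[|?]]] // _; apply/eqP.

Lemma pair_sum_indicator (e f : 'I_3) :
  pair_sum (fun u v => 4 * ((u == e) && (v == f))%:R) = 0.
Proof.
have [AZ BZ CZ DZ EZ] : [/\ inZ (affine_vec 0 0 0 1 2), inZ (affine_vec 0 1 2 0 0),
    inZ (affine_vec 1 1 2 0 0), inZ (affine_vec 1 0 0 1 2) & inZ (affine_vec 0 1 2 1 2)].
  by split; apply: affine_vec_inZ.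
have Z1_AA := pair_sum_Z1 AZ AZ.
have Z3_AA_34 := @pair_sum_Z3 _ _ e3 e4 AZ AZ isT isT.
have Z3_AB_23 := @pair_sum_Z3 _ _ e2 e3 AZ BZ isT isT.
have Z3_AB_14 := @pair_sum_Z3 _ _ e1 e4 AZ BZ isT isT.
have Z3_AE_23 := @pair_sum_Z3 _ _ e2 e3 AZ EZ isT isT.
have Z4_AB := pair_sum_Z4 AZ BZ.
have Z4_AC := pair_sum_Z4 AZ CZ.
have Z4_DB := pair_sum_Z4 DZ BZ.
have Z4_DC := pair_sum_Z4 DZ CZ.
rewrite /pair_mono_at !ffunE !inE /= ?(mulr0, mulr1, add0r, addr0)
  in Z1_AA Z3_AA_34 Z3_AB_23 Z3_AB_14 Z3_AE_23 Z4_AB Z4_AC Z4_DB Z4_DC.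
(* Each indicator is a sum of the nine tests above; the decompositions come
   from solving the corresponding linear system over Z_8. *)
case: e f => [[|[|[|//]]] ?] [[|[|[|//]]] ?].
- by apply: (eq0_pair_sum _ Z4_AB); eval_pair_mono.
- by apply: (eq0_pair_sum _ (pair_sum_add0 Z3_AB_14 Z4_AC)); eval_pair_mono.
- by apply: (eq0_pair_sum _ (pair_sum_add0 Z4_AB Z4_AC)); eval_pair_mono.
- by apply: (eq0_pair_sum _ (pair_sum_add0 Z3_AB_23 Z4_DB)); eval_pair_mono.
- apply: (eq0_pair_sum _ (pair_sum_add0 (pair_sum_add0 Z1_AA Z3_AA_34) Z4_DC)).
  by eval_pair_mono.
- apply: (eq0_pair_sum _ (pair_sum_add0
    (pair_sum_add0 (pair_sum_add0 Z3_AB_23 Z3_AE_23) Z4_DB) Z4_DC)).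
  by eval_pair_mono.
- by apply: (eq0_pair_sum _ (pair_sum_add0 Z4_AB Z4_DB)); eval_pair_mono.
- apply: (eq0_pair_sum _ (pair_sum_add0 (pair_sum_add0 (pair_sum_add0
    (pair_sum_add0 Z3_AA_34 Z3_AB_14) Z3_AE_23) Z4_AC) Z4_DC)).
  by eval_pair_mono.
- apply: (eq0_pair_sum _ (pair_sum_add0
    (pair_sum_add0 (pair_sum_add0 Z4_AB Z4_AC) Z4_DB) Z4_DC)).
  by eval_pair_mono.
Qed.

End PairReduction.

Lemma card_le2_sub_set2 n (S : {set 'I_n}) : (2 <= n)%N -> (#|S| <= 2)%N ->
  exists i j : 'I_n, i != j /\ S \subset [set i; j].
Proof.
move=> n_ge2; have n_gt0 : (0 < n)%N by apply: ltnW.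
pose i0 := Ordinal n_gt0; pose i1 := Ordinal n_ge2.
rewrite leq_eqVlt ltnS leq_eqVlt ltnS leqn0 cards_eq0.
case/or3P=> [/cards2P[x [y [xy ->]]] | /cards1P[x ->] | /eqP->].
- by exists x, y.
- have [->|xi0] := eqVneq x i0; first by exists i0, i1; rewrite sub1set !inE eqxx.
  by exists x, i0; rewrite sub1set !inE eqxx.
- by exists i0, i1; rewrite sub0set.
Qed.

Section Descent.

Variables (n : nat) (b : {ffun 'I_n -> 'I_3} -> 'Z_8).

Definition supp (alpha : {ffun 'I_n -> 'I_3}) : {set 'I_n} := [set k | alpha k != ord0].

Lemma supp_proper_agree2 (alpha beta : {ffun 'I_n -> 'I_3}) (i j : 'I_n) :
  supp alpha \subset [set i; j] -> beta i = alpha i -> beta j = alpha j -> beta != alpha ->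
  supp alpha \proper supp beta.
Proof.
move=> sAij bi bj; have off_ij k : k \notin [set i; j] -> alpha k = ord0.
  by move=> kij; apply/eqP; apply: contraNT kij => akn0; apply: (subsetP sAij); rewrite inE.
move=> neq_ba; apply/properP; split.
  by apply/subsetP=> k kA; case/set2P: (subsetP sAij k kA) => kE; move: kA; rewrite !inE kE ?bi ?bj.
have [k bk_ak] : exists k, beta k != alpha k.
  by apply/existsP; apply: contraNT neq_ba => /existsPn eq_ba; apply/eqP/ffunP=> k; apply/eqP/negPn.
have kij : k \notin [set i; j] by rewrite !inE; apply: contra bk_ak => /orP[] /eqP->; rewrite ?bi ?bj.
have ak0 := off_ij k kij.
by exists k; rewrite !inE ?ak0 ?eqxx // -ak0.
Qed.

Hypothesis n_ge2 : (2 <= n)%N.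
Hypothesis b01 : forall alpha, In_set alpha -> b alpha = 0 \/ b alpha = 1.
Hypothesis pair_sum_indicator0 : forall i j : 'I_n, i != j -> forall e f : 'I_3,
  pair_sum b i j (fun u v => 4 * ((u == e) && (v == f))%:R) = 0.

Lemma coef_eq0_of_larger alpha : In_set alpha ->
  (forall beta, In_set beta -> (#|supp alpha| < #|supp beta|)%N -> b beta = 0) ->
  b alpha = 0.
Proof.
move=> Ialpha larger0; have [i [j [ij sAij]]] := card_le2_sub_set2 n_ge2 Ialpha.
have := pair_sum_indicator0 ij (alpha i) (alpha j).
rewrite /pair_sum (bigD1 alpha) //= !eqxx big1 ?addr0 => [|beta /andP[Ibeta neq_ba]].
  by case: (b01 Ialpha) => -> // /eqP.
have [/andP[/eqP/val_inj bi /eqP/val_inj bj] | _] :=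
  boolP ((beta i == alpha i :> nat) && (beta j == alpha j :> nat)); last by rewrite !mulr0.
by rewrite larger0 ?mul0r //; apply/proper_card/(supp_proper_agree2 sAij).
Qed.

Lemma coef_eq0 alpha : In_set alpha -> b alpha = 0.
Proof.
suff coef_eq0_depth d : forall alpha, In_set alpha -> (3 - #|supp alpha| <= d)%N -> b alpha = 0.
  by move=> Ialpha; apply: (coef_eq0_depth 3) => //; apply: leq_subr.
elim: d => [|d IHd] {}alpha Ialpha le_d.
  by have : (#|supp alpha| <= 2)%N := Ialpha; lia.
apply: coef_eq0_of_larger => // beta Ibeta lt_ab; apply: IHd => //.
by have : (#|supp beta| <= 2)%N := Ibeta; lia.
Qed.

End Descent.

Unset Implicit Arguments.

Theorem lemma3p8 (n : nat) (b : {ffun 'I_n -> 'I_3} -> 'Z_8) :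
  (2 <= n)%N ->
  (forall alpha, In_set alpha -> b alpha = 0 \/ b alpha = 1) ->
  preservesZ (fop b) ->
  forall alpha, In_set alpha -> b alpha = 0.
Proof.
move=> n_ge2 b01 fZ; apply: coef_eq0 => // i j ij e f.
exact: pair_sum_indicator.
Qed.
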